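(* Let $p$ be an odd prime, $n$ a positive integer and $i$ an integer with $0\le i\le n/2$ and $p\nmid i$. Then $$v_p\!\left(\binom{2(n-i)}{n-i}^2\binom{n-i}{i}\right)\ge v_p(n).$$
   Context: $v_p$ denotes the $p$-adic valuation. *)

From mathcomp Require Import all_boot.

From mathcomp Require Import all_boot zify.

(* By Kummer's theorem, v_p(C(a+b, a)) counts the levels k at which adding a
   and b in base p carries, i.e. p^k <= a mod p^k + b mod p^k.  Put m = n - i.
   For every k <= v_p(n), p^k divides m + i but not i, and this forces a carry
   at level k either in m + m or in i + (m - i).  Hence the carry counts of
   C(2m, m) and C(m, i) add up to at least v_p(n). *)

Definition carry (d a b : nat) : bool := d <= a %% d + b %% d.

Lemma logn_fact_sum p n N : prime p -> n <= N ->
  logn p n`! = \sum_(1 <= k < N.+1) n %/ p ^ k.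
Proof.
move=> p_pr le_nN; rewrite logn_fact // [RHS](@big_cat_nat _ _ _ n.+1) //=.
rewrite -[LHS]addn0; congr (_ + _).
rewrite big_nat_cond big1 // => k /andP[/andP[lt_nk _] _].
by rewrite divn_small // (leq_trans lt_nk) // ltnW // ltn_expl ?prime_gt1.
Qed.

Lemma logn_bin_carry p a b N : prime p -> a + b <= N ->
  logn p 'C(a + b, a) = \sum_(1 <= k < N.+1) carry (p ^ k) a b.
Proof.
move=> p_pr le_abN; rewrite /carry.
have /(congr1 (logn p)) := bin_fact (leq_addr b a); rewrite addKn.
rewrite !lognM ?muln_gt0 ?fact_gt0 ?bin_gt0 ?leq_addr //.
rewrite !(@logn_fact_sum p _ N) //; try by apply: leq_trans le_abN; lia.
under [X in _ = X]eq_bigr => k _ do rewrite divnD ?expn_gt0 ?prime_gt0 //.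
by rewrite !big_split /=; lia.
Qed.

(* Writing s = m mod d and r = i mod d > 0, d | m + i gives s + r = d; without
   a carry in m + m we get s < r, and then i + (m - i) must carry. *)
Lemma carry_split d m i : 0 < d -> d %| m + i -> ~~ (d %| i) -> i <= m ->
  carry d m m || carry d i (m - i).
Proof.
move=> d_gt0 dvd_mi ndvd_i le_im; rewrite /carry.
have r_gt0 : 0 < i %% d by rewrite lt0n.
have := modnD m i d_gt0; rewrite (eqP dvd_mi).
have := modnD i (m - i) d_gt0; rewrite subnKC //.
have := ltn_pmod m d_gt0; have := ltn_pmod i d_gt0.
have := ltn_pmod (m - i) d_gt0.
case: (leqP d (m %% d + i %% d)); case: (leqP d (i %% d + (m - i) %% d));
  case: (leqP d (m %% d + m %% d)) => //=; lia.
Qed.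

Lemma logn_lt {p n : nat} : 1 < p -> 0 < n -> logn p n < n.
Proof.
move=> p_gt1 n_gt0; apply: leq_trans (ltn_expl _ p_gt1) _.
by rewrite dvdn_leq // pfactor_dvdnn.
Qed.

Lemma sum_nat_bool_ge K N (b : nat -> bool) : K <= N ->
  (forall k, 0 < k <= K -> b k) -> K <= \sum_(1 <= k < N.+1) b k.
Proof.
move=> le_KN bK; rewrite (@big_cat_nat _ _ _ K.+1) //=.
apply: leq_trans (leq_addr _ _).
have -> : \sum_(1 <= k < K.+1) b k = \sum_(1 <= k < K.+1) 1.
  by rewrite !big_nat; apply: eq_bigr => k /bK ->.
by rewrite sum_nat_const_nat; lia.
Qed.

Theorem proposition16 (p n i : nat) :
  prime p -> odd p -> 0 < n -> 2 * i <= n -> ~~ (p %| i) ->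
  logn p n <= logn p ('C(2 * (n - i), n - i) ^ 2 * 'C(n - i, i)).
Proof.
move=> p_pr _ n_gt0 le_2in ndvd_pi.
set m := n - i; set K := logn p n.
have le_im : i <= m by rewrite /m; lia.
have le_Km : K <= m + m by have := logn_lt (prime_gt1 p_pr) n_gt0; rewrite /m; lia.
have -> : 2 * m = m + m by lia.
rewrite -[in 'C(m, i)](subnKC le_im).
rewrite lognM ?expn_gt0 ?bin_gt0 ?leq_addr ?leq_addl // lognX.
rewrite !(@logn_bin_carry p _ _ (m + m)) ?subnKC //; last by lia.
apply: leq_trans (_ : \sum_(1 <= k < (m + m).+1)
  (carry (p ^ k) m m || carry (p ^ k) i (m - i)) <= _).
  apply: sum_nat_bool_ge => // k /andP[k_gt0 le_kK].
  apply: carry_split => //; first by rewrite expn_gt0 prime_gt0.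
    have -> : m + i = n by rewrite /m; lia.
    by apply: dvdn_trans (pfactor_dvdnn p n); rewrite dvdn_exp2l.
  apply: contra ndvd_pi; apply: dvdn_trans.
  by rewrite -{1}(expn1 p) dvdn_exp2l.
rewrite mul2n -addnn -addnA -big_split /=; apply: leq_trans (leq_addl _ _).
by apply: leq_sum => k _; case: (carry _ m m); case: (carry _ i _).
Qed.
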